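(* Let $F\subsetneq K$ be fields of characteristic $0$, with $F$ a proper nonempty subfield of $K$. Let $p\in K[x]$ be a nonzero polynomial and $r$ a positive integer. Then $D_F(p^{[r]})\geq D_F(p)$.
   Context: $p^{[r]}$ denotes the $r$-th iterate of $p$. For sets $F\subset K$ and $p(x)=\sum_{k=0}^{n}a_kx^k\in K[x]$ with $a_n\neq 0$, the $F$ deficit $D_F(p)$ is defined as follows: if $p\in K[x]\setminus F[x]$, then $D_F(p)=n-\max\{0\le k\le n: a_k\notin F\}$; if $p\in F[x]$, then $D_F(p)=n$. Here $F[x]$ denotes the set of polynomials with all coefficients in $F$. *)

From mathcomp Require Import all_boot all_order all_algebra.
Set Implicit Arguments. Unset Strict Implicit. Unset Printing Implicit Defensive.
Import GRing.Theory.
Local Open Scope ring_scope.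

Definition poly_iter (K : fieldType) (r : nat) (p : {poly K}) : {poly K} :=
  iter r (fun q => p \Po q) 'X.

Definition deficit (K : fieldType) (F : {pred K}) (p : {poly K}) : nat :=
  if p \is a polyOver F then (size p).-1
  else ((size p).-1 - \max_(k < size p | (p`_k)%R \notin F) (k : nat))%N.

From HB Require Import structures.
From mathcomp Require Import all_boot all_order all_algebra.
From mathcomp Require Import zify.
Set Implicit Arguments. Unset Printing Implicit Defensive.
Import GRing.Theory.
Local Open Scope ring_scope.

(* Having deficit at least d means that the coefficients of p of index at
   least size p - d lie in F.  This "tail condition" is stable under sums,
   F-scalings and products (for the appropriate starting indices), hence under
   powers and under composition p \Po g as soon as g satisfies it for the same
   d <= deg g: in p \Po g = \sum_i p_i g^i the terms with p_i possibly outside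
   F are of degree too small to reach the tail. *)

Section TailOver.

Variables (R : nzSemiRingType) (S : {pred R}).
Hypothesis semiS : semiring_closed S.
HB.instance Definition _ := GRing.isSemiringClosed.Build R S semiS.

Definition tail_over (t : nat) (p : {poly R}) :=
  forall k, (t <= k)%N -> p`_k \in S.

Lemma tail_overW t u (p : {poly R}) :
  (t <= u)%N -> tail_over t p -> tail_over u p.
Proof. by move=> tu hp k uk; apply: hp; apply: leq_trans uk. Qed.

Lemma tail_over_size t (p : {poly R}) : (size p <= t)%N -> tail_over t p.
Proof. by move=> pt k tk; rewrite nth_default ?rpred0 // (leq_trans pt). Qed.

Lemma tail_over_sum (I : Type) (r : seq I) (P : pred I) (f : I -> {poly R}) t :
  (forall i, P i -> tail_over t (f i)) -> tail_over t (\sum_(i <- r | P i) f i).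
Proof.
by move=> hf k tk; rewrite coef_sum; apply: rpred_sum => i /hf; apply.
Qed.

Lemma tail_overZ c (p : {poly R}) t :
  c \in S -> tail_over t p -> tail_over t (c *: p).
Proof. by move=> Sc hp k tk; rewrite coefZ rpredM ?hp. Qed.

Lemma tail_overM (a b : {poly R}) t1 t2 : tail_over t1 a -> tail_over t2 b ->
  tail_over (maxn (t1 + size b).-1 (t2 + size a).-1) (a * b).
Proof.
move=> ha hb k; rewrite geq_max => /andP[k1 k2]; rewrite coefM.
apply: rpred_sum => -[j /=]; rewrite ltnS => jk _.
have [jb|jb] := ltnP (k - j) (size b); last first.
  by rewrite (nth_default _ jb) mulr0 rpred0.
have [ja|ja] := ltnP j (size a); last first.
  by rewrite (nth_default _ ja) mul0r rpred0.
by apply: rpredM; [apply: ha | apply: hb]; lia.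
Qed.

Lemma tail_overX (g : {poly R}) d i :
  (d <= (size g).-1)%N -> tail_over (size g - d) g ->
  tail_over (((size g).-1 * i).+1 - d) (g ^+ i).
Proof.
(* i = 0 is apart: there the start index 1 - d may truncate to 0, and
   tail_overM would then lose the tail of g ^+ 1. *)
move=> dg hg; case: i => [|i].
  by move=> k _; rewrite expr0 coefC; case: eqP => _; rewrite ?rpred1 ?rpred0.
elim: i => [|i IH]; first by rewrite expr1 muln1; apply: tail_overW hg; lia.
rewrite exprSr; apply: tail_overW (tail_overM IH hg).
have := size_poly_exp_leq g i.+1.
have : ((size g).-1 <= (size g).-1 * i.+1)%N by rewrite leq_pmulr.
rewrite [in X in (_ <= X.+1 - d)%N]mulnS.
move: ((size g).-1 * i.+1)%N => m; lia.
Qed.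

End TailOver.

Section TailOverComp.

Variables (R : idomainType) (S : {pred R}).
Hypothesis semiS : semiring_closed S.
HB.instance Definition _ := GRing.isSemiringClosed.Build R S semiS.

Lemma tail_over_comp (p g : {poly R}) d : (d <= (size g).-1)%N ->
  tail_over S (size p - d) p -> tail_over S (size g - d) g ->
  tail_over S (size (p \Po g) - d) (p \Po g).
Proof.
move=> dg hp hg.
have [->|pg_neq0] := eqVneq (p \Po g) 0.
  by apply: tail_over_size => //; rewrite size_poly0.
have size_pg : size (p \Po g) = ((size p).-1 * (size g).-1).+1.
  by rewrite -size_comp_poly prednK // size_poly_gt0.
rewrite size_pg comp_polyE; apply: tail_over_sum => // -[i /= ip] _.
have [tail_i|head_i] := leqP (size p - d) i.
  apply: tail_overZ => //; first exact: hp.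
  apply: tail_overW (tail_overX semiS d i dg hg); apply: leq_sub2r.
  by rewrite ltnS mulnC leq_mul2r; apply/orP; right; lia.
apply: tail_over_size => //.
rewrite (leq_trans (size_scale_leq _ _)) //.
rewrite (leq_trans (size_poly_exp_leq _ _)) //.
have : (i + d <= (size p).-1)%N by lia.
move: dg; move: (size g).-1 (size p).-1 => n m; nia.
Qed.

End TailOverComp.

Lemma size_poly_iter (K : fieldType) r (p : {poly K}) :
  (size (poly_iter r p)).-1 = ((size p).-1 ^ r)%N.
Proof.
elim: r => [|r IH]; first by rewrite /poly_iter /= size_polyX.
by rewrite /poly_iter iterS size_comp_poly -/(poly_iter r p) IH expnS.
Qed.

Lemma size_poly_iter_geq (K : fieldType) r (p : {poly K}) :
  ((size p).-1 <= (size (poly_iter r.+1 p)).-1)%N.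
Proof.
rewrite size_poly_iter; case: (size p).-1 => // n.
by rewrite expnS leq_pmulr ?expn_gt0.
Qed.

Section Deficit.

Variables (K : fieldType) (F : {pred K}).
Hypothesis semiF : semiring_closed F.
HB.instance Definition _ := GRing.isSemiringClosed.Build K F semiF.

Lemma deficit_leq_size (p : {poly K}) : (deficit F p <= (size p).-1)%N.
Proof. by rewrite /deficit; case: ifP => // _; apply: leq_subr. Qed.

Lemma tail_over_deficit (p : {poly K}) : tail_over F (size p - deficit F p) p.
Proof.
rewrite /deficit; case: ifPn => [/polyOverP pF k _ // | pNF k k_tail].
apply/negPn/negP => pkNF.
have kp : (k < size p)%N.
  by rewrite ltnNge; apply: contra pkNF => /(nth_default 0) ->; rewrite rpred0.
have := @leq_bigmax_cond _ (fun j : 'I_(size p) => p`_j \notin F)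
  (fun j => j : nat) (Ordinal kp) pkNF.
have : (\max_(j < size p | (p`_j)%R \notin F) (j : nat) <= (size p).-1)%N.
  by apply/bigmax_leqP => j _; rewrite -ltnS prednK ?ltn_ord //; lia.
move: k_tail; move: (\max_(j < size p | _) _) => m /=.
set s := size p in kp *; lia.
Qed.

Lemma leq_deficit d (p : {poly K}) :
  (d <= (size p).-1)%N -> tail_over F (size p - d) p -> (d <= deficit F p)%N.
Proof.
move=> dp hp; rewrite /deficit; case: ifPn => // _.
have : (\max_(j < size p | (p`_j)%R \notin F) (j : nat) <= (size p).-1 - d)%N.
  apply/bigmax_leqP => j pjNF.
  have : ~~ (size p - d <= j)%N by apply: contra pjNF => /hp ->.
  have := ltn_ord j; lia.
lia.
Qed.

Lemma tail_over_poly_iter d (p : {poly K}) r : (d <= (size p).-1)%N ->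
  tail_over F (size p - d) p ->
  tail_over F (size (poly_iter r.+1 p) - d) (poly_iter r.+1 p).
Proof.
move=> dp hp; elim: r => [|r IH]; first by rewrite /poly_iter /= comp_polyXr.
rewrite /poly_iter iterS -/(poly_iter r.+1 p).
apply: tail_over_comp => //; exact: leq_trans dp (size_poly_iter_geq r p).
Qed.

End Deficit.

Theorem theorem21 (K : fieldType) (F : {pred K})
  (charK0 : [pchar K] =i pred0)
  (subfieldF : GRing.divring_closed F)
  (properF : exists x : K, x \notin F)
  (p : {poly K}) (p_neq0 : p != 0) (r : nat) (r_gt0 : (0 < r)%N) :
  (deficit F p <= deficit F (poly_iter r p))%N.
Proof.
have semiF : semiring_closed F :=
  GRing.subring_closed_semi (GRing.divring_closedBM subfieldF).
case: r r_gt0 => // r _.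
have dp := deficit_leq_size F p.
apply: leq_deficit; first exact: leq_trans dp (size_poly_iter_geq r p).
exact (tail_over_poly_iter semiF _ r dp (tail_over_deficit semiF p)).
Qed.
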